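(* Let $G$ be a timed region graph, let $\mu\in\Delta_{\mathrm{Min}}$ be regionally constant, let $T$ be a regionally simple regional function and $D$ a regionally constant regional function. Then $\mathrm{Improve}_{\mathrm{Min}}(\mu,(T,D))$ is regionally constant.
   Context: Fix $k\in\mathbb N$. Let $C$ be a finite set of clocks. A clock valuation is a function $\nu:C\to[0,k]$; $V$ is the set of clock valuations. For $t\ge 0$ let $(\nu+t)(c)=\nu(c)+t$; for $C'\subseteq C$ let $\mathrm{Reset}(\nu,C')(c)=0$ if $c\in C'$ and $=\nu(c)$ otherwise. Simple clock constraints are $c\bowtie i$ or $c-c'\bowtie i$ with $c,c'\in C$, $i\in\{0,\dots,k\}$, ${\bowtie}\in\{<,>,=,\le,\ge\}$. A clock region is an equivalence class of $V$ under ''satisfies the same simple clock constraints''; a clock zone is a convex union of clock regions. For a finite set $L$ of locations, a configuration is $s=(\ell,\nu)\in Q=L\times V$; write $s(c)=\nu(c)$ and $s+t=(\ell,\nu+t)$ (defined if $\nu+t\in V$). A region is $(\ell,P)$ (identified with $\{(\ell,\nu):\nu\in P\}$) for a clock region $P$; $[s]$ is the region containing $s$, $\mathcal R$ the set of regions, $\overline R$ the topological closure of $R$. A zone is a set $\{(\ell,\nu):\nu\in W_\ell\}$ with each $W_\ell$ a clock zone. A timed automaton $\mathcal T=(L,C,S,A,E,\delta,\rho,F)$ consists of finite $L$, finite $C$, a zone $S\subseteq Q$ of states, a finite set $A$ of actions, $E:A\to 2^S$ with every $E(a)$ a zone, $\delta:L\times A\to L$, $\rho:A\to 2^C$, and a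 zone $F\subseteq S$ of final states. For $s=(\ell,\nu)$: $s\to_t s'$ if $s'=s+t$ is defined and $s+t'\in S$ for all $t'\in[0,t]$; $s\xrightarrow{a}s'$ if $s'=(\delta(\ell,a),\mathrm{Reset}(\nu,\rho(a)))$, $s,s'\in S$ and $s\in E(a)$. For $(a,t)\in A\times\mathbb R_{\ge0}$, $\mathrm{Succ}(s,(a,t))=(\delta(\ell,a),\mathrm{Reset}(\nu+t,\rho(a)))$. A reachability-time game is $\Gamma=(\mathcal T,L_{\mathrm{Min}},L_{\mathrm{Max}})$ with $(L_{\mathrm{Min}},L_{\mathrm{Max}})$ a partition of $L$; $S_{\mathrm{Min}}$, $S_{\mathrm{Max}}$, $\mathcal R_{\mathrm{Min}}$, $\mathcal R_{\mathrm{Max}}$ are the states/regions with location in $L_{\mathrm{Min}}$ resp. $L_{\mathrm{Max}}$. Region relations: $R\to_*R'$ if there are $s\in R,s'\in R'$, $t\ge 0$ with $s\to_t s'$; $R\to_{+1}R'$ ($R'$ is the time successor of $R$) if $R\to_*R'$, $R\ne R'$, and $R\to_*R''\to_*R'$ implies $R''\in\{R,R'\}$; $R\xrightarrow aR'$ if there are $s\in R,s'\in R'$ with $s\xrightarrow a s'$. $R$ is thin if for all $s\in R$ and $\varepsilon>0$, $[s+\varepsilon]\neq[s]$. For thin $R''$, $b\in\{0,\dots,k\}$, $c\in C$: $R\to_{b,c}R''$ if $R\to_*R''$ and $s+(b-s(c))\in R''$ for all $s\in R$. Simple timed actions: $\mathcal A=A\times\{0,\dots,k\}\times C$; for $\alpha=(a,b,c)$,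 $t(s,\alpha)=b-s(c)$ if $s(c)\le b$ and $0$ otherwise, and $\mathrm{Succ}(s,\alpha)=\mathrm{Succ}(s,(a,t(s,\alpha)))$. For $F$ defined on $\overline{R'}$: $F^\oplus_\alpha(s)=t(s,\alpha)+F(\mathrm{Succ}(s,\alpha))$ and $F^\boxplus_\alpha(s)=1+F(\mathrm{Succ}(s,\alpha))$. Timed region graph $\widehat\Gamma=(\mathcal R,\mathcal M)$: $(R,\alpha,R')\in\mathcal M$ with $\alpha=(a,b,c)$ iff (i) $R\to_{b,c}R''\xrightarrow aR'$ for some $R''$; or (ii) $R\in\mathcal R_{\mathrm{Min}}$ and $R\to_{b,c}R''\to_{+1}R'''\xrightarrow aR'$ for some $R'',R'''$; or (iii) $R\in\mathcal R_{\mathrm{Max}}$ and $R\to_{b,c}R''$, $R'''\to_{+1}R''$, $R'''\xrightarrow aR'$ for some $R'',R'''$. (For $(R,\alpha,R')\in\mathcal M$ and $s\in R$, $\mathrm{Succ}(s,\alpha)\in\overline{R'}$.) Regional functions: maps $T$ assigning to each region $R$ a function $T(R):\overline R\to\mathbb R\cup\{\infty\}$ (resp. $D(R):\overline R\to\mathbb N\cup\{\infty\}$); $\widetilde T(s)=T([s])(s)$. $T$ is regionally simple (regionally constant) if each $T(R)$ is simple (constant), where $F:X\to\mathbb R$ is simple if $F\equiv e$ for some $e\in\mathbb Z$ or $F(s)=e-s(c)$ for some $e\in\mathbb Z$, $c\in C$. Lexicographic order: $(x,y)\le^{\mathrm{lex}}(x',y')$ iff $x<x'$, or $x=x'$ and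 $y\le y'$. Strategies in graphs: for a graph $G=(\mathcal R,\mathcal M')$, $\mathcal M'\subseteq\mathcal M$, a positional strategy for Min is a map $\mu:S_{\mathrm{Min}}\to\mathcal M'$ with $\mu(s)$ of the form $([s],\alpha,R)$; $\Delta_{\mathrm{Min}}$ is the set of these. A strategy is regionally constant if $[s]=[s']$ implies equal values. For $s\in S$ let $M_*(s,(T,D))$ be the set of moves $m=([s],\alpha,R')$ of $G$ at which $(T(R')^\oplus_\alpha(s),D(R')^\boxplus_\alpha(s))$ is lexicographically minimal. Fix a function $\mathrm{Choose}$ selecting an element of each nonempty set of moves. $\mathrm{Improve}_{\mathrm{Min}}(\mu,(T,D))(s)=\mu(s)$ if $\mu(s)\in M_*(s,(T,D))$, and $=\mathrm{Choose}(M_*(s,(T,D)))$ otherwise. *)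

From Stdlib Require Import Reals ZArith List Classical ClassicalEpsilon
  FunctionalExtensionality PropExtensionality.
Open Scope R_scope.

Section TimedGames.
Context {L C A : Type}.
Variable k : nat.

Definition Val := C -> R.
Definition Conf := (L * Val)%type.
Definition clk (s : Conf) (c : C) : R := snd s c.

Definition inV (nu : Val) : Prop := forall c, 0 <= nu c <= INR k.

Definition delay (nu : Val) (t : R) : Val := fun c => nu c + t.
(* subsets of the finite set C are represented by their characteristic function *)
Definition reset (nu : Val) (X : C -> bool) : Val :=
  fun c => if X c then 0 else nu c.
(* s + t (as a raw configuration; "defined" means inV of the valuation) *)
Definition shift (s : Conf) (t : R) : Conf := (fst s, delay (snd s) t).

Inductive cmp := CLt | CGt | CEq | CLe | CGe.
Definition evc (o : cmp) (x y : R) : Prop :=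
  match o with
  | CLt => x < y | CGt => x > y | CEq => x = y | CLe => x <= y | CGe => x >= y
  end.
Inductive sconstr :=
  | SC1 (c : C) (o : cmp) (i : nat)
  | SC2 (c c' : C) (o : cmp) (i : nat).
Definition sat (nu : Val) (g : sconstr) : Prop :=
  match g with
  | SC1 c o i => evc o (nu c) (INR i)
  | SC2 c c' o i => evc o (nu c - nu c') (INR i)
  end.
Definition constr_ok (g : sconstr) : Prop :=
  match g with SC1 _ _ i => (i <= k)%nat | SC2 _ _ _ i => (i <= k)%nat end.
Definition clock_equiv (nu nu' : Val) : Prop :=
  forall g, constr_ok g -> (sat nu g <-> sat nu' g).

Definition clock_zone (W : Val -> Prop) : Prop :=
  (forall nu, W nu -> inV nu) /\
  (forall nu nu', W nu -> inV nu' -> clock_equiv nu nu' -> W nu') /\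
  (forall nu nu' (l : R), W nu -> W nu' -> 0 <= l <= 1 ->
      W (fun c => l * nu c + (1 - l) * nu' c)).
Definition zone (Z : Conf -> Prop) : Prop :=
  forall l : L, clock_zone (fun nu => Z (l, nu)).

Definition regionOf (s : Conf) : Conf -> Prop :=
  fun s' => fst s' = fst s /\ inV (snd s') /\ clock_equiv (snd s) (snd s').
Definition is_region (Rg : Conf -> Prop) : Prop :=
  exists s, inV (snd s) /\ Rg = regionOf s.
(* topological closure (L discrete, valuations with the sup-norm topology) *)
Definition in_cl (Rg : Conf -> Prop) (s : Conf) : Prop :=
  forall eps, eps > 0 -> exists s', Rg s' /\ fst s' = fst s /\
    forall c, Rabs (snd s' c - snd s c) < eps.

Record TA := mkTA {
  taS : Conf -> Prop;
  taE : A -> Conf -> Prop;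
  taDelta : L -> A -> L;
  taRho : A -> C -> bool;
  taF : Conf -> Prop }.

Definition finite_type (X : Type) : Prop := exists l : list X, forall x, In x l.

Definition wf_TA (T : TA) : Prop :=
  finite_type L /\ finite_type C /\ finite_type A /\
  zone (taS T) /\
  (forall a, zone (taE T a) /\ forall s, taE T a s -> taS T s) /\
  zone (taF T) /\ (forall s, taF T s -> taS T s).

Variable T : TA.

Definition delay_step (s : Conf) (t : R) (s' : Conf) : Prop :=
  0 <= t /\ inV (delay (snd s) t) /\ s' = shift s t /\
  forall t', 0 <= t' <= t -> taS T (shift s t').
Definition act_step (s : Conf) (a : A) (s' : Conf) : Prop :=
  s' = (taDelta T (fst s) a, reset (snd s) (taRho T a)) /\
  taS T s /\ taS T s' /\ taE T a s.
Definition succ (s : Conf) (a : A) (t : R) : Conf :=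
  (taDelta T (fst s) a, reset (delay (snd s) t) (taRho T a)).

Definition reach_star (R1 R2 : Conf -> Prop) : Prop :=
  exists s s' t, R1 s /\ R2 s' /\ delay_step s t s'.
Definition time_succ (R1 R2 : Conf -> Prop) : Prop :=
  reach_star R1 R2 /\ R1 <> R2 /\
  forall R3, is_region R3 -> reach_star R1 R3 -> reach_star R3 R2 ->
    R3 = R1 \/ R3 = R2.
Definition act_rel (a : A) (R1 R2 : Conf -> Prop) : Prop :=
  exists s s', R1 s /\ R2 s' /\ act_step s a s'.
Definition thin (Rg : Conf -> Prop) : Prop :=
  forall s, Rg s -> forall eps, eps > 0 -> regionOf (shift s eps) <> regionOf s.
Definition to_bc (b : nat) (c : C) (R1 R2 : Conf -> Prop) : Prop :=
  thin R2 /\ reach_star R1 R2 /\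
  forall s, R1 s -> R2 (shift s (INR b - clk s c)).

(** Simple timed actions (a, b, c); b is required to be <= k in moves *)
Definition Act := (A * nat * C)%type.
Definition tau (s : Conf) (al : Act) : R :=
  let '(_, b, c) := al in
  if Rle_dec (clk s c) (INR b) then INR b - clk s c else 0.
Definition succ_act (s : Conf) (al : Act) : Conf :=
  let '(a, _, _) := al in succ s a (tau s al).

Variable Lmin : L -> bool. (* L_Min = {l | Lmin l}, L_Max = complement *)
Definition region_min (Rg : Conf -> Prop) : Prop :=
  exists s, Rg s /\ Lmin (fst s) = true.
Definition region_max (Rg : Conf -> Prop) : Prop :=
  exists s, Rg s /\ Lmin (fst s) = false.

Definition Move := ((Conf -> Prop) * Act * (Conf -> Prop))%type.

Definition inM (m : Move) : Prop :=
  let '(R1, al, R2) := m in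
  let '(a, b, c) := al in
  is_region R1 /\ is_region R2 /\ (b <= k)%nat /\
  ( (exists R3, is_region R3 /\ to_bc b c R1 R3 /\ act_rel a R3 R2)
 \/ (region_min R1 /\ exists R3 R4, is_region R3 /\ is_region R4 /\
       to_bc b c R1 R3 /\ time_succ R3 R4 /\ act_rel a R4 R2)
 \/ (region_max R1 /\ exists R3 R4, is_region R3 /\ is_region R4 /\
       to_bc b c R1 R3 /\ time_succ R4 R3 /\ act_rel a R4 R2) ).

Inductive ER := ERfin (r : R) | ERinf.
Inductive EN := ENfin (n : nat) | ENinf.
Definition ER_addR (x : R) (y : ER) : ER :=
  match y with ERfin r => ERfin (x + r) | ERinf => ERinf end.
Definition EN_succ (y : EN) : EN :=
  match y with ENfin n => ENfin (S n) | ENinf => ENinf end.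
Definition ER_lt (x y : ER) : Prop :=
  match x, y with
  | ERfin a, ERfin b => a < b | ERfin _, ERinf => True | ERinf, _ => False end.
Definition EN_le (x y : EN) : Prop :=
  match x, y with
  | ENfin a, ENfin b => (a <= b)%nat | _, ENinf => True | ENinf, ENfin _ => False end.
Definition lex_le (p q : ER * EN) : Prop :=
  ER_lt (fst p) (fst q) \/ (fst p = fst q /\ EN_le (snd p) (snd q)).

(** Regional functions: T R is meaningful on the closure of R *)
Definition RegFunR := (Conf -> Prop) -> Conf -> ER.
Definition RegFunN := (Conf -> Prop) -> Conf -> EN.

Definition regionally_simple (F : RegFunR) : Prop :=
  forall Rg, is_region Rg -> exists e : Z,
    (forall s, in_cl Rg s -> F Rg s = ERfin (IZR e)) \/
    (exists c, forall s, in_cl Rg s -> F Rg s = ERfin (IZR e - clk s c)).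
Definition regionally_constantN (F : RegFunN) : Prop :=
  forall Rg, is_region Rg -> exists d, forall s, in_cl Rg s -> F Rg s = d.

Definition oplus (F : RegFunR) (al : Act) (R2 : Conf -> Prop) (s : Conf) : ER :=
  ER_addR (tau s al) (F R2 (succ_act s al)).
Definition boxplus (F : RegFunN) (al : Act) (R2 : Conf -> Prop) (s : Conf) : EN :=
  EN_succ (F R2 (succ_act s al)).

(** Strategies in a graph G = (regions, Mp), Mp ⊆ M *)
Variable Mp : Move -> Prop.

Definition S_min (s : Conf) : Prop := taS T s /\ Lmin (fst s) = true.

Definition is_strategy_min (mu : Conf -> Move) : Prop :=
  forall s, S_min s -> Mp (mu s) /\ fst (fst (mu s)) = regionOf s.
Definition regionally_constant_strat (mu : Conf -> Move) : Prop :=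
  forall s s', S_min s -> S_min s' -> regionOf s = regionOf s' -> mu s = mu s'.

Definition move_val (F : RegFunR) (D : RegFunN) (m : Move) (s : Conf) : ER * EN :=
  let '(_, al, R2) := m in (oplus F al R2 s, boxplus D al R2 s).

Definition Mstar (F : RegFunR) (D : RegFunN) (s : Conf) : Move -> Prop :=
  fun m => Mp m /\ fst (fst m) = regionOf s /\
    forall m', Mp m' -> fst (fst m') = regionOf s ->
      lex_le (move_val F D m s) (move_val F D m' s).

Definition choose_ok (Choose : (Move -> Prop) -> Move) : Prop :=
  forall X : Move -> Prop, (exists m, X m) -> X (Choose X).

Definition Improve_min (Choose : (Move -> Prop) -> Move) (mu : Conf -> Move)
  (F : RegFunR) (D : RegFunN) (s : Conf) : Move :=
  if excluded_middle_informative (Mstar F D s (mu s)) then mu s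
  else Choose (Mstar F D s).

End TimedGames.

(* Let s, s' be two Min-states in the same region.  Since mu is regionally
   constant, mu s = mu s', so it suffices to show that the sets of optimal
   moves M_*(s,(T,D)) and M_*(s',(T,D)) coincide.  Both consist of moves
   leaving the common region R1 = [s] = [s'], and the key fact is:

     for every move m = (R1,(a,b,c),R2) of the timed region graph there are
     E : Z, a clock x and d such that the value of m at every t in R1 is
     (E - t(x), d)      (lemma [move_value_affine]).

   Indeed t(alpha) = b - t(c) on R1 (lemma [tau_of_to_bc]) and Succ(t,alpha)
   lies in the closure of R2 (lemma [move_target_closure]), where T(R2) is
   simple and D(R2) constant.  The closure property rests on the geometry of
   regions: a point of a thin region is a limit of points of its time
   successor and of its time predecessor ([time_succ_forward],
   [time_succ_backward]), and resets are 1-Lipschitz.  Finally, comparing two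
   values (E1 - t(x1), d1) and (E2 - t(x2), d2) only depends on how
   t(x2) - t(x1) compares with the integer E2 - E1, which is the same for
   clock-equivalent valuations ([affine_lex_invariant]). *)
From Stdlib Require Import Reals ROrderedType ZArith List Lra Lia
  FunctionalExtensionality PropExtensionality.
Open Scope R_scope.

Ltac compare_cases :=
  repeat match goal with |- context [Rcompare ?x ?y] => destruct (Rcompare_spec x y) end;
  simpl; first [reflexivity | exfalso; lra].

Definition cmp_holds (o : cmp) (r : comparison) : Prop :=
  match o with
  | CLt => r = Lt | CGt => r = Gt | CEq => r = Eq | CLe => r <> Gt | CGe => r <> Lt
  end.

Lemma evc_Rcompare o x y : evc o x y <-> cmp_holds o (Rcompare x y).
Proof.
  destruct (Rcompare_spec x y); destruct o; simpl; split; intro;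
    first [lra | discriminate | congruence | tauto].
Qed.

Lemma evc_same_compare o x y x' y' :
  Rcompare x y = Rcompare x' y' -> (evc o x y <-> evc o x' y').
Proof. intro H. rewrite !evc_Rcompare, H. reflexivity. Qed.

Lemma Rcompare_ext x y x' y' :
  (x < y <-> x' < y') -> (x = y <-> x' = y') -> Rcompare x y = Rcompare x' y'.
Proof.
  intros Hlt Heq.
  destruct (Rcompare_spec x y), (Rcompare_spec x' y'); try reflexivity;
    exfalso; intuition lra.
Qed.

Lemma Rcompare_diff_swap a b z : Rcompare (a - b) z = CompOpp (Rcompare (b - a) (- z)).
Proof. compare_cases. Qed.

Lemma Rcompare_rearrange a1 b1 a2 b2 :
  Rcompare (a1 - b1) (a2 - b2) = Rcompare (b2 - b1) (a2 - a1).
Proof. compare_cases. Qed.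

Lemma lex_le_fin (u v : R) (d1 d2 : EN) :
  lex_le (ERfin u, d1) (ERfin v, d2) <->
  Rcompare u v = Lt \/ (Rcompare u v = Eq /\ EN_le d1 d2).
Proof.
  unfold lex_le; simpl.
  assert (Hinj : ERfin u = ERfin v <-> u = v)
    by (split; [intro H; injection H; auto | intros ->; reflexivity]).
  rewrite Hinj.
  destruct (Rcompare_spec u v) as [h|h|h]; split; intros [H|[H1 H2]];
    solve [exfalso; lra | discriminate | left; auto | right; auto].
Qed.

Lemma pos_below a b : a > 0 -> b > 0 -> exists d, 0 < d <= a /\ d <= b.
Proof.
  intros Ha Hb. exists (Rmin a b).
  pose proof (Rmin_l a b); pose proof (Rmin_r a b).
  assert (0 < Rmin a b) by (apply Rmin_glb_lt; lra). lra.
Qed.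

Section ClockEquivalence.
Context {C : Type} (k : nat).
Implicit Types nu : @Val C.

Lemma clock_equiv_refl nu : clock_equiv k nu nu.
Proof. intros g _; tauto. Qed.

Lemma clock_equiv_sym nu nu' : clock_equiv k nu nu' -> clock_equiv k nu' nu.
Proof. intros H g Hg; specialize (H g Hg); tauto. Qed.

Lemma clock_equiv_trans nu1 nu2 nu3 :
  clock_equiv k nu1 nu2 -> clock_equiv k nu2 nu3 -> clock_equiv k nu1 nu3.
Proof. intros H1 H2 g Hg; specialize (H1 g Hg); specialize (H2 g Hg); tauto. Qed.

(* The constraints [c >= 0] and [c <= k] keep equivalent valuations inside V. *)
Lemma inV_of_equiv nu nu' : inV k nu -> clock_equiv k nu nu' -> inV k nu'.
Proof.
  intros Hv H c. specialize (Hv c).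
  pose proof (H (SC1 c CGe 0) (Nat.le_0_l k)) as H0.
  pose proof (H (SC1 c CLe k) (le_n k)) as Hk. simpl in H0, Hk.
  split; [apply Rge_le, H0 | apply Hk]; lra.
Qed.

Lemma equiv_compare_clock nu nu' c i :
  clock_equiv k nu nu' -> (i <= k)%nat -> Rcompare (nu c) (INR i) = Rcompare (nu' c) (INR i).
Proof.
  intros H Hi. apply Rcompare_ext; [exact (H (SC1 c CLt i) Hi) | exact (H (SC1 c CEq i) Hi)].
Qed.

Lemma equiv_compare_diff nu nu' c c' i :
  clock_equiv k nu nu' -> (i <= k)%nat ->
  Rcompare (nu c - nu c') (INR i) = Rcompare (nu' c - nu' c') (INR i).
Proof.
  intros H Hi.
  apply Rcompare_ext; [exact (H (SC2 c c' CLt i) Hi) | exact (H (SC2 c c' CEq i) Hi)].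
Qed.

Lemma Rcompare_nonneg_int x x' (z : Z) :
  x <= INR k -> x' <= INR k ->
  (forall i, (i <= k)%nat -> Rcompare x (INR i) = Rcompare x' (INR i)) ->
  (0 <= z)%Z -> Rcompare x (IZR z) = Rcompare x' (IZR z).
Proof.
  intros Hx Hx' H Hz.
  destruct (Z_le_gt_dec z (Z.of_nat k)) as [Hzk|Hzk].
  - rewrite <- (Z2Nat.id z Hz), <- INR_IZR_INZ. apply H. lia.
  - apply Z.gt_lt, IZR_lt in Hzk. rewrite <- INR_IZR_INZ in Hzk. compare_cases.
Qed.

Lemma equiv_compare_clock_int nu nu' c (z : Z) :
  inV k nu -> clock_equiv k nu nu' -> Rcompare (nu c) (IZR z) = Rcompare (nu' c) (IZR z).
Proof.
  intros Hv H. pose proof (inV_of_equiv nu nu' Hv H c) as Hc'. specialize (Hv c).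
  destruct (Z_lt_le_dec z 0) as [Hz|Hz].
  - apply IZR_lt in Hz. compare_cases.
  - apply Rcompare_nonneg_int; try lra; auto.
    intros i Hi; apply equiv_compare_clock; auto.
Qed.

Lemma equiv_compare_diff_int nu nu' c c' (z : Z) :
  inV k nu -> clock_equiv k nu nu' ->
  Rcompare (nu c - nu c') (IZR z) = Rcompare (nu' c - nu' c') (IZR z).
Proof.
  intros Hv H. pose proof (inV_of_equiv nu nu' Hv H) as Hv'.
  pose proof (Hv c); pose proof (Hv c'); pose proof (Hv' c); pose proof (Hv' c').
  destruct (Z_lt_le_dec z 0) as [Hz|Hz].
  - rewrite !(Rcompare_diff_swap _ _ (IZR z)), <- opp_IZR. f_equal.
    apply Rcompare_nonneg_int; try lra; [|lia].
    intros i Hi; apply equiv_compare_diff; auto.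
  - apply Rcompare_nonneg_int; try lra; auto.
    intros i Hi; apply equiv_compare_diff; auto.
Qed.

Lemma reset_equiv nu nu' X :
  inV k nu -> clock_equiv k nu nu' -> clock_equiv k (reset nu X) (reset nu' X).
Proof.
  intros Hv H [c o i | c c' o i] Hg; simpl; unfold reset.
  - destruct (X c); [tauto | exact (H (SC1 c o i) Hg)].
  - destruct (X c), (X c').
    + tauto.
    + apply evc_same_compare.
      rewrite INR_IZR_INZ, !(Rcompare_diff_swap 0), !Rminus_0_r, <- opp_IZR.
      f_equal. apply equiv_compare_clock_int; auto.
    + rewrite !Rminus_0_r. exact (H (SC1 c o i) Hg).
    + exact (H (SC2 c c' o i) Hg).
Qed.

Lemma list_pos_lower_bound (l : list R) :
  exists d, d > 0 /\ forall r, In r l -> r > 0 -> d < r.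
Proof.
  induction l as [|a l [d [Hd H]]].
  - exists 1; split; [lra | intros r []].
  - destruct (Rlt_dec 0 a) as [Ha|Ha].
    + exists (Rmin d (a / 2)); split.
      * apply Rmin_glb_lt; lra.
      * intros r [<-|Hr] Hr0.
        -- pose proof (Rmin_r d (a / 2)); lra.
        -- pose proof (Rmin_l d (a / 2)); pose proof (H r Hr Hr0); lra.
    + exists d; split; auto. intros r [<-|Hr] Hr0; [lra | auto].
Qed.

Definition gap nu (d : R) : Prop :=
  forall c i, (i <= k)%nat ->
    (nu c < INR i -> nu c + d < INR i) /\ (nu c > INR i -> nu c - d > INR i).

Lemma gap_exists nu : finite_type C -> exists d, d > 0 /\ gap nu d.
Proof.
  intros [lc Hlc].
  set (dists := flat_map (fun c => flat_map
     (fun i => INR i - nu c :: nu c - INR i :: nil) (seq 0 (S k))) lc).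
  destruct (list_pos_lower_bound dists) as [d [Hd H]].
  exists d; split; auto. intros c i Hi.
  assert (Hin : forall r, r = INR i - nu c \/ r = nu c - INR i -> In r dists).
  { intros r Hr. apply in_flat_map. exists c; split; auto.
    apply in_flat_map. exists i; split.
    - apply in_seq; lia.
    - simpl; destruct Hr; subst; auto. }
  split; intro Hc.
  - assert (d < INR i - nu c) by (apply H; [apply Hin; auto | lra]). lra.
  - assert (d < nu c - INR i) by (apply H; [apply Hin; auto | lra]). lra.
Qed.

Lemma delay_compare nu d0 d c i :
  gap nu d0 -> -d0 <= d <= d0 -> (i <= k)%nat ->
  Rcompare (nu c + d) (INR i) =
  match Rcompare (nu c) (INR i) with Eq => Rcompare d 0 | r => r end.
Proof.
  intros G Hd Hi. destruct (G c i Hi) as [Glt Ggt].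
  destruct (Rcompare_spec (nu c) (INR i)) as [h|h|h].
  - rewrite h. compare_cases.
  - pose proof (Glt h). compare_cases.
  - pose proof (Ggt h). compare_cases.
Qed.

Lemma delay_equiv nu nu' d0 d0' d d' :
  clock_equiv k nu nu' -> gap nu d0 -> gap nu' d0' ->
  -d0 <= d <= d0 -> -d0' <= d' <= d0' -> Rcompare d 0 = Rcompare d' 0 ->
  clock_equiv k (delay nu d) (delay nu' d').
Proof.
  intros H G G' Hd Hd' Hsign [c o i | c c' o i] Hg; simpl; unfold delay.
  - apply evc_same_compare.
    rewrite (delay_compare nu d0 d c i G Hd Hg), (delay_compare nu' d0' d' c i G' Hd' Hg),
      (equiv_compare_clock nu nu' c i H Hg), Hsign.
    reflexivity.
  - replace (nu c + d - (nu c' + d)) with (nu c - nu c') by ring.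
    replace (nu' c + d' - (nu' c' + d')) with (nu' c - nu' c') by ring.
    exact (H (SC2 c c' o i) Hg).
Qed.

End ClockEquivalence.

Section Regions.
Context {L C : Type} (k : nat).
Implicit Types (z w : @Conf L C) (Rg : @Conf L C -> Prop).

Lemma regionOf_intro z w :
  inV k (snd z) -> fst w = fst z -> clock_equiv k (snd z) (snd w) -> regionOf k z w.
Proof.
  intros Hz Hf He.
  split; [exact Hf | split; [exact (inV_of_equiv k _ _ Hz He) | exact He]].
Qed.

Lemma regionOf_self z : inV k (snd z) -> regionOf k z z.
Proof. intro Hz. apply regionOf_intro; auto. apply clock_equiv_refl. Qed.

Lemma region_inV Rg z : is_region k Rg -> Rg z -> inV k (snd z).
Proof. intros [r [_ ->]] [_ [Hz _]]; exact Hz. Qed.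

Lemma region_related Rg z w :
  is_region k Rg -> Rg z -> Rg w -> fst w = fst z /\ clock_equiv k (snd z) (snd w).
Proof.
  intros [r [_ ->]] [Hz1 [_ Hz3]] [Hw1 [_ Hw3]]. split; [congruence|].
  eapply clock_equiv_trans; [apply clock_equiv_sym|]; eauto.
Qed.

Lemma region_of_mem Rg z : is_region k Rg -> Rg z -> Rg = regionOf k z.
Proof.
  intros HR Hz. apply functional_extensionality; intro w; apply propositional_extensionality.
  split.
  - intro Hw. destruct (region_related Rg z w HR Hz Hw) as [Hf He].
    apply regionOf_intro; auto. exact (region_inV Rg z HR Hz).
  - destruct HR as [r [_ ->]]. destruct Hz as [Hz1 [_ Hz3]]. intros [Hw1 [Hw2 Hw3]].
    split; [congruence | split; [exact Hw2 | eapply clock_equiv_trans; eauto]].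
Qed.

Lemma shift_shift z a b : shift (shift z a) b = shift z (a + b).
Proof.
  unfold shift, delay; simpl. f_equal. apply functional_extensionality; intro; ring.
Qed.

Lemma shift_0 z : shift z 0 = z.
Proof.
  destruct z as [l nu]; unfold shift, delay; simpl. f_equal.
  apply functional_extensionality; intro; ring.
Qed.

Lemma shift_inV z t d :
  inV k (snd z) -> inV k (snd (shift z t)) -> 0 <= d <= t -> inV k (snd (shift z d)).
Proof.
  intros Hz Ht Hd c. specialize (Hz c); specialize (Ht c).
  simpl in *; unfold delay in *; lra.
Qed.

Definition approached Rg z : Prop :=
  forall eps, eps > 0 -> exists d, Rabs d < eps /\ Rg (shift z d).

Lemma approached_self Rg z : Rg z -> approached Rg z.
Proof. intros Hz eps Heps. exists 0. rewrite Rabs_R0, shift_0. auto. Qed.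

Lemma approached_of_segment Rg z d0 sg :
  d0 > 0 -> sg = 1 \/ sg = -1 -> (forall d, 0 < d <= d0 -> Rg (shift z (sg * d))) ->
  approached Rg z.
Proof.
  intros Hd0 Hsg H eps Heps.
  destruct (pos_below d0 (eps / 2) Hd0 ltac:(lra)) as [d Hd].
  exists (sg * d). split; [|apply H; lra].
  rewrite Rabs_mult, (Rabs_pos_eq d) by lra.
  destruct Hsg as [-> | ->]; [rewrite Rabs_R1 | rewrite Rabs_left by lra]; lra.
Qed.

Lemma affine_lex_invariant (s s' : @Conf L C)
  (E1 E2 : Z) (x1 x2 : C) (d1 d2 : EN) :
  inV k (snd s) -> clock_equiv k (snd s) (snd s') ->
  (lex_le (ERfin (IZR E1 - clk s x1), d1) (ERfin (IZR E2 - clk s x2), d2) <->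
   lex_le (ERfin (IZR E1 - clk s' x1), d1) (ERfin (IZR E2 - clk s' x2), d2)).
Proof.
  intros Hv He. rewrite !lex_le_fin.
  rewrite (Rcompare_rearrange _ (clk s x1)), (Rcompare_rearrange _ (clk s' x1)).
  unfold clk. rewrite <- minus_IZR, (equiv_compare_diff_int k _ _ x2 x1 (E2 - E1) Hv He).
  reflexivity.
Qed.

End Regions.

Section RegionGraph.
Context {L C A : Type} (k : nat) (TA0 : @TA L C A).
Implicit Types (x y z : @Conf L C).

Lemma state_inV z : wf_TA k TA0 -> taS TA0 z -> inV k (snd z).
Proof.
  intros [_ [_ [_ [HS _]]]] Hz. destruct z as [l nu]. exact (proj1 (HS l) nu Hz).
Qed.

Lemma time_succ_delay R1 R2 :
  is_region k R1 -> is_region k R2 -> time_succ k TA0 R1 R2 ->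
  exists x t, R1 x /\ R2 (shift x t) /\ delay_step k TA0 x t (shift x t) /\ t > 0.
Proof.
  intros HR1 HR2 [[x [x' [t [Hx [Hx' Hstep]]]]] [Hne _]].
  pose proof Hstep as [Ht [_ [Hx'eq _]]]. subst x'.
  exists x, t. split; [exact Hx | split; [exact Hx' | split; [exact Hstep |]]].
  destruct (Req_dec t 0) as [->|]; [|lra].
  exfalso. apply Hne. rewrite shift_0 in Hx'.
  rewrite (region_of_mem k R1 x), (region_of_mem k R2 x); auto.
Qed.

Lemma intermediate_region R1 R2 x t d :
  is_region k R1 -> is_region k R2 -> time_succ k TA0 R1 R2 ->
  R1 x -> R2 (shift x t) -> delay_step k TA0 x t (shift x t) -> 0 <= d <= t ->
  regionOf k (shift x d) = R1 \/ regionOf k (shift x d) = R2.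
Proof.
  intros HR1 HR2 [_ [_ Hmin]] Hx Hxt [Ht [Hv [_ HS]]] Hd.
  assert (Vd : inV k (snd (shift x d))).
  { apply (shift_inV k x t d); [exact (region_inV k R1 x HR1 Hx) | exact Hv | exact Hd]. }
  apply Hmin.
  - exists (shift x d); auto.
  - exists x, (shift x d), d.
    split; [exact Hx | split; [apply regionOf_self; exact Vd |]].
    split; [lra | split; [exact Vd | split; [reflexivity |]]].
    intros t' Ht'; apply HS; lra.
  - exists (shift x d), (shift x t), (t - d).
    split; [apply regionOf_self; exact Vd | split; [exact Hxt |]].
    split; [lra | split; [| split]].
    + change (inV k (snd (shift (shift x d) (t - d)))).
      rewrite shift_shift; replace (d + (t - d)) with t by ring; exact Hv.
    + rewrite shift_shift; f_equal; ring.
    + intros t' Ht'; rewrite shift_shift; apply HS; lra.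
Qed.

Lemma time_succ_forward R3 R4 y :
  finite_type C -> is_region k R3 -> is_region k R4 -> thin k R3 ->
  time_succ k TA0 R3 R4 -> R3 y -> approached R4 y.
Proof.
  intros HfC HR3 HR4 Hthin Hsucc Hy.
  destruct (time_succ_delay R3 R4 HR3 HR4 Hsucc) as [x [t [Hx [Hxt [Hstep Ht]]]]].
  destruct (gap_exists k (snd x) HfC) as [dx [Hdx Gx]].
  destruct (gap_exists k (snd y) HfC) as [dy [Hdy Gy]].
  (* a delay d1 too small to cross an integer, no longer than the delay t *)
  destruct (pos_below dx t Hdx Ht) as [d1 Hd1].
  destruct (intermediate_region R3 R4 x t d1 HR3 HR4 Hsucc Hx Hxt Hstep ltac:(lra))
    as [E3|E4].
  - (* the region right after x cannot be R3, which is thin *)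
    exfalso. apply (Hthin x Hx d1); [lra|].
    rewrite E3. apply (region_of_mem k R3 x HR3 Hx).
  - (* so R4 is the region of x + d1, which contains y + d for small d > 0 *)
    destruct (region_related k R3 x y HR3 Hx Hy) as [Hf He].
    apply (approached_of_segment R4 y dy 1); [lra | left; reflexivity |].
    intros d Hd. rewrite <- E4. apply regionOf_intro.
    + apply (shift_inV k x t d1); [exact (region_inV k R3 x HR3 Hx) | |lra].
      exact (region_inV k R4 _ HR4 Hxt).
    + simpl; congruence.
    + apply (delay_equiv k _ _ dx dy); auto; try lra. compare_cases.
Qed.

Lemma time_succ_backward R3 R4 y :
  finite_type C -> is_region k R3 -> is_region k R4 -> thin k R3 ->
  time_succ k TA0 R4 R3 -> R3 y -> approached R4 y.
Proof.
  intros HfC HR3 HR4 Hthin Hsucc Hy.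
  destruct (time_succ_delay R4 R3 HR4 HR3 Hsucc) as [x [t [Hx [Hxt [Hstep Ht]]]]].
  destruct (gap_exists k (snd (shift x t)) HfC) as [dx [Hdx Gx]].
  destruct (gap_exists k (snd y) HfC) as [dy [Hdy Gy]].
  (* a delay d1 too small to cross an integer, no longer than the delay t *)
  destruct (pos_below dx t Hdx Ht) as [d1 Hd1].
  assert (Hz : shift x (t - d1) = shift (shift x t) (- d1))
    by (rewrite shift_shift; f_equal; ring).
  assert (Vz : inV k (snd (shift x (t - d1)))).
  { apply (shift_inV k x t); [exact (region_inV k R4 x HR4 Hx) | | lra].
    exact (region_inV k R3 _ HR3 Hxt). }
  destruct (intermediate_region R4 R3 x t (t - d1) HR4 HR3 Hsucc Hx Hxt Hstep
    ltac:(lra)) as [E4|E3].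
  - (* R4 is the region of (x + t) - d1, which contains y - d for small d > 0 *)
    destruct (region_related k R3 _ y HR3 Hxt Hy) as [Hf He].
    apply (approached_of_segment R4 y dy (-1)); [lra | right; reflexivity |].
    intros d Hd. rewrite <- E4. apply regionOf_intro; [exact Vz | simpl in *; congruence |].
    rewrite Hz. apply (delay_equiv k _ _ dx dy); auto; try lra. compare_cases.
  - (* the region right before shift x t cannot be R3, which is thin *)
    exfalso. rewrite Hz in E3, Vz.
    assert (HzR3 : R3 (shift (shift x t) (- d1))) by (rewrite <- E3; apply regionOf_self; auto).
    apply (Hthin _ HzR3 d1); [lra|].
    rewrite shift_shift, Rplus_opp_l, shift_0, E3. symmetry. apply (region_of_mem k R3 _ HR3 Hxt).
Qed.

Lemma action_region R4 R2 a w :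
  is_region k R4 -> is_region k R2 -> act_rel TA0 a R4 R2 -> R4 w ->
  R2 (taDelta TA0 (fst w) a, reset (snd w) (taRho TA0 a)).
Proof.
  intros HR4 HR2 [w4 [w2 [Hw4 [Hw2 [Heq _]]]]] Hw.
  destruct (region_related k R4 w4 w HR4 Hw4 Hw) as [Hf He].
  rewrite (region_of_mem k R2 w2 HR2 Hw2). subst w2.
  apply regionOf_intro; simpl.
  - exact (region_inV k R2 _ HR2 Hw2).
  - congruence.
  - apply reset_equiv; [exact (region_inV k R4 w4 HR4 Hw4) | exact He].
Qed.

(* Since resets are 1-Lipschitz, the action image of an approached point lies
   in the closure of the target region. *)
Lemma action_closure R4 R2 a y :
  is_region k R4 -> is_region k R2 -> act_rel TA0 a R4 R2 -> approached R4 y ->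
  in_cl R2 (taDelta TA0 (fst y) a, reset (snd y) (taRho TA0 a)).
Proof.
  intros HR4 HR2 Hact Happ eps Heps.
  destruct (Happ eps Heps) as [d [Hd Hyd]].
  exists (taDelta TA0 (fst y) a, reset (delay (snd y) d) (taRho TA0 a)).
  split; [exact (action_region R4 R2 a _ HR4 HR2 Hact Hyd) | split; [reflexivity |]].
  intro c; simpl; unfold reset, delay. destruct (taRho TA0 a c).
  - rewrite Rminus_diag, Rabs_R0; lra.
  - replace (snd y c + d - snd y c) with d by ring; exact Hd.
Qed.

(* If R1 reaches the thin region where c = b, then s(c) <= b on R1, so the
   simple timed action (a, b, c) waits exactly b - s(c). *)
Lemma tau_of_to_bc R1 R3 (a : A) b c s :
  is_region k R1 -> is_region k R3 -> (b <= k)%nat -> to_bc k TA0 b c R1 R3 -> R1 s ->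
  tau s (a, b, c) = INR b - clk s c.
Proof.
  intros HR1 HR3 Hb [_ [[x1 [x3 [t [Hx1 [Hx3 [Ht [_ [Hx3eq _]]]]]]]] Hall]] Hs.
  unfold tau. destruct (Rle_dec (clk s c) (INR b)) as [|Hsc]; [reflexivity | exfalso].
  destruct (region_related k R1 s x1 HR1 Hs Hx1) as [_ E1].
  assert (Hx1c : snd x1 c > INR b)
    by (apply (E1 (SC1 c CGt b) Hb); unfold clk in Hsc; simpl; lra).
  destruct (region_related k R3 _ x3 HR3 (Hall x1 Hx1) Hx3) as [_ E3].
  assert (Hx3c : snd x3 c = INR b).
  { apply (E3 (SC1 c CEq b) Hb). simpl; unfold delay, clk; ring. }
  rewrite Hx3eq in Hx3c; simpl in Hx3c; unfold delay in Hx3c. lra.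
Qed.

Lemma move_target_closure Lmin R1 R2 a b c s :
  finite_type C -> inM k TA0 Lmin (R1, (a, b, c), R2) -> R1 s ->
  tau s (a, b, c) = INR b - clk s c /\ in_cl R2 (succ_act TA0 s (a, b, c)).
Proof.
  intros HfC [HR1 [HR2 [Hb Hcases]]] Hs.
  assert (Hgen : forall R3 R4, is_region k R3 -> is_region k R4 -> to_bc k TA0 b c R1 R3 ->
            act_rel TA0 a R4 R2 ->
            (R3 (shift s (INR b - clk s c)) -> approached R4 (shift s (INR b - clk s c))) ->
            tau s (a, b, c) = INR b - clk s c /\ in_cl R2 (succ_act TA0 s (a, b, c))).
  { intros R3 R4 HR3 HR4 Hbc Hact Happ.
    pose proof (tau_of_to_bc R1 R3 a b c s HR1 HR3 Hb Hbc Hs) as Htau.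
    split; [exact Htau |]. unfold succ_act, succ. rewrite Htau.
    apply (action_closure R4 R2 a (shift s (INR b - clk s c)) HR4 HR2 Hact).
    apply Happ. destruct Hbc as [_ [_ Hall]]. exact (Hall s Hs). }
  destruct Hcases as [[R3 [HR3 [Hbc Hact]]]
                     | [[_ [R3 [R4 [HR3 [HR4 [Hbc [Hts Hact]]]]]]]
                     | [_ [R3 [R4 [HR3 [HR4 [Hbc [Hts Hact]]]]]]]]].
  - apply (Hgen R3 R3); auto. apply approached_self.
  - apply (Hgen R3 R4); auto.
    exact (time_succ_forward R3 R4 _ HfC HR3 HR4 (proj1 Hbc) Hts).
  - apply (Hgen R3 R4); auto.
    exact (time_succ_backward R3 R4 _ HfC HR3 HR4 (proj1 Hbc) Hts).
Qed.

Lemma move_value_affine Lmin (T : RegFunR) (D : RegFunN) (m : @Move L C A) :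
  finite_type C -> regionally_simple k T -> regionally_constantN k D ->
  inM k TA0 Lmin m ->
  exists (E : Z) (x : C) (d : EN), forall s, fst (fst m) s ->
    move_val TA0 T D m s = (ERfin (IZR E - clk s x), d).
Proof.
  intros HfC HT HD Hm. destruct m as [[R1 [[a b] c]] R2]. simpl fst.
  pose proof Hm as [_ [HR2 _]].
  destruct (HD R2 HR2) as [d Hd].
  assert (Hval : forall s, R1 s ->
    in_cl R2 (succ_act TA0 s (a, b, c)) /\
    move_val TA0 T D (R1, (a, b, c), R2) s =
      (ER_addR (INR b - clk s c) (T R2 (succ_act TA0 s (a, b, c))), EN_succ d)).
  { intros s Hs.
    destruct (move_target_closure Lmin R1 R2 a b c s HfC Hm Hs) as [Htau Hcl].
    split; [exact Hcl |]. simpl. unfold oplus, boxplus. rewrite Htau, (Hd _ Hcl). reflexivity. }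
  assert (Hclk : forall s c', R1 s -> clk (succ_act TA0 s (a, b, c)) c' =
            if taRho TA0 a c' then 0 else clk s c' + (INR b - clk s c)).
  { intros s c' Hs.
    destruct (move_target_closure Lmin R1 R2 a b c s HfC Hm Hs) as [Htau _].
    change (succ_act TA0 s (a, b, c)) with (succ TA0 s a (tau s (a, b, c))).
    rewrite Htau. reflexivity. }
  assert (HbZ : INR b = IZR (Z.of_nat b)) by apply INR_IZR_INZ.
  destruct (HT R2 HR2) as [e [He | [c' He]]].
  - exists (Z.of_nat b + e)%Z, c, (EN_succ d). intros s Hs.
    destruct (Hval s Hs) as [Hcl Hms]. refine (eq_trans Hms _). rewrite (He _ Hcl). simpl.
    rewrite plus_IZR, <- HbZ. f_equal; f_equal; ring.
  - destruct (taRho TA0 a c') eqn:Hr.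
    + exists (Z.of_nat b + e)%Z, c, (EN_succ d). intros s Hs.
      destruct (Hval s Hs) as [Hcl Hms]. refine (eq_trans Hms _).
      rewrite (He _ Hcl), (Hclk s c' Hs), Hr. simpl.
      rewrite plus_IZR, <- HbZ. f_equal; f_equal; ring.
    + exists e, c', (EN_succ d). intros s Hs.
      destruct (Hval s Hs) as [Hcl Hms]. refine (eq_trans Hms _).
      rewrite (He _ Hcl), (Hclk s c' Hs), Hr. simpl.
      f_equal; f_equal; ring.
Qed.

Lemma Mstar_region_invariant Lmin (Mp : @Move L C A -> Prop) (T : RegFunR) (D : RegFunN) s s' :
  finite_type C -> (forall m, Mp m -> inM k TA0 Lmin m) ->
  regionally_simple k T -> regionally_constantN k D ->
  inV k (snd s) -> regionOf k s = regionOf k s' ->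
  Mstar k TA0 Mp T D s = Mstar k TA0 Mp T D s'.
Proof.
  intros HfC HG HT HD Hv Hreg.
  assert (Hss : regionOf k s s) by (apply regionOf_self; exact Hv).
  assert (Hs_in : regionOf k s' s) by (rewrite <- Hreg; exact Hss).
  destruct Hs_in as [Hfst [_ He']].
  assert (He : clock_equiv k (snd s) (snd s')) by (apply clock_equiv_sym; exact He').
  assert (Hs's : regionOf k s s')
    by (apply regionOf_intro; [exact Hv | symmetry; exact Hfst | exact He]).
  assert (Hcmp : forall m m', Mp m -> Mp m' ->
            fst (fst m) = regionOf k s -> fst (fst m') = regionOf k s ->
            (lex_le (move_val TA0 T D m s) (move_val TA0 T D m' s) <->
             lex_le (move_val TA0 T D m s') (move_val TA0 T D m' s'))).
  { intros m m' Hm Hm' Hf Hf'.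
    destruct (move_value_affine Lmin T D m HfC HT HD (HG m Hm)) as [E1 [x1 [d1 H1]]].
    destruct (move_value_affine Lmin T D m' HfC HT HD (HG m' Hm')) as [E2 [x2 [d2 H2]]].
    rewrite Hf in H1; rewrite Hf' in H2.
    rewrite (H1 s Hss), (H1 s' Hs's), (H2 s Hss), (H2 s' Hs's).
    exact (affine_lex_invariant k s s' E1 E2 x1 x2 d1 d2 Hv He). }
  unfold Mstar. rewrite <- Hreg.
  apply functional_extensionality; intro m; apply propositional_extensionality.
  split; intros [Hm [Hf Hall]]; (split; [exact Hm | split; [exact Hf |]]);
    intros m' Hm' Hf'; specialize (Hall m' Hm' Hf'); specialize (Hcmp m m' Hm Hm' Hf Hf');
    tauto.
Qed.

End RegionGraph.

Theorem mainTheorem15 (k : nat) (L C A : Type) (TA0 : @TA L C A)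
  (Hwf : wf_TA k TA0) (Lmin : L -> bool)
  (Mp : @Move L C A -> Prop)
  (HG : forall m, Mp m -> inM k TA0 Lmin m)
  (mu : @Conf L C -> @Move L C A)
  (Hmu : is_strategy_min k TA0 Lmin Mp mu)
  (Hmuc : regionally_constant_strat k TA0 Lmin mu)
  (T : @RegFunR L C) (HT : regionally_simple k T)
  (D : @RegFunN L C) (HD : regionally_constantN k D)
  (Choose : (@Move L C A -> Prop) -> @Move L C A) (HC : choose_ok Choose) :
  regionally_constant_strat k TA0 Lmin
    (Improve_min k TA0 Mp Choose mu T D).
Proof.
  intros s s' Hs Hs' Hreg.
  assert (HfC : finite_type C) by apply Hwf.
  assert (Hv : inV k (snd s)) by exact (state_inV k TA0 s Hwf (proj1 Hs)).
  unfold Improve_min.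
  rewrite (Hmuc s s' Hs Hs' Hreg),
    (Mstar_region_invariant k TA0 Lmin Mp T D s s' HfC HG HT HD Hv Hreg).
  reflexivity.
Qed.
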